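(* Assume only upper-bound group constraints and $\mathcal S\neq\emptyset$, and let $F$ be a maxmin-fair distribution over $\mathcal S$ for satisfaction $A=V$. Then $$\min_{u\in\mathcal U}F[u]\ =\ \min_{\emptyset\neq X\subseteq\mathcal U}\frac{H(X)}{|X|},\qquad\text{where } H(X)=\max_{r\in\mathcal S}\sum_{u\in X}V(r,u).$$
   Context: Ranking setting: $\mathcal U=\{u_1,\dots,u_n\}$ finite set of individuals partitioned into groups $C_1,\dots,C_t$; rankings are bijections $r:\mathcal U\to[n]$. Only upper bounds: $\mathcal S=\{r:\ |\{u\in C_k: r(u)\le i\}|\le u_i^k\ \forall i\in[n],k\in[t]\}$ for given integers $u_i^k$. $V(r,u)=f(r(u))-g(u)$ with $f:[n]\to\mathbb R$ non-increasing and $g:\mathcal U\to\mathbb R$ arbitrary. For a distribution $D$ over $\mathcal S$, $D[u]=\mathbb E_{r\sim D}[V(r,u)]$. $F$ is maxmin-fair if for every distribution $D$ over $\mathcal S$ and every $u$: $D[u]>F[u]$ implies there exists $v$ with $D[v]<F[v]\le F[u]$. *)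

From HB Require Import structures.
From mathcomp Require Import all_boot all_order all_algebra.
From mathcomp Require Import reals.
Set Implicit Arguments. Unset Strict Implicit. Unset Printing Implicit Defensive.
Import Order.TTheory GRing.Theory Num.Theory.
Local Open Scope ring_scope.

Section Ranking.
Variables (R : realType) (U : finType) (t : nat).
(* grp u = index k of the group C_k containing u (a partition of U). *)
Variable grp : U -> 'I_t.
(* ub k i = u_i^k, the upper bound for group k among the top i positions, i in [1,n]. *)
Variable ub : 'I_t -> nat -> nat.
(* f on positions 1..n, g on individuals. *)
Variables (f : nat -> R) (g : U -> R).

(* A candidate ranking: a function U -> 'I_n, position r u (0-based) means rank (r u).+1. *)
Definition ranking := {ffun U -> 'I_#|U|}.

Definition feasible (r : ranking) : bool :=
  injectiveb r &&
  [forall i : 'I_#|U|, forall k : 'I_t,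
      #|[set u | (grp u == k) && (r u <= i)%N]| <= ub k i.+1]%N.

Definition V (r : ranking) (u : U) : R := f (r u).+1 - g u.

Definition is_distr (D : {ffun ranking -> R}) : Prop :=
  (forall r, 0 <= D r) /\ (\sum_r D r = 1) /\ (forall r, D r != 0 -> feasible r).

Definition expV (D : {ffun ranking -> R}) (u : U) : R := \sum_r D r * V r u.

Definition maxmin_fair (F : {ffun ranking -> R}) : Prop :=
  is_distr F /\
  forall D u, is_distr D -> expV F u < expV D u ->
    exists v, expV D v < expV F v /\ expV F v <= expV F u.

Definition sumV (r : ranking) (X : {set U}) : R := \sum_(u in X) V r u.

Definition is_H (X : {set U}) (h : R) : Prop :=
  (exists2 r, feasible r & h = sumV r X) /\ (forall r, feasible r -> sumV r X <= h).

End Ranking.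

From HB Require Import structures.
From mathcomp Require Import all_boot all_order all_algebra perm.
From mathcomp Require Import reals.
From mathcomp Require Import zify.
Import Order.TTheory GRing.Theory Num.Theory.
Local Open Scope ring_scope.
Set Implicit Arguments. Unset Strict Implicit. Unset Printing Implicit Defensive.

(* Let F be maxmin-fair, m the least expected satisfaction F[u], and X0 the set
   of individuals with F[u] = m.  Averaging over F gives |X| m <= sum_(u in X)
   F[u] <= H(X) for every X, so it suffices to prove H(X0) <= |X0| m.

   The combinatorial heart is an exchange argument on rankings: for any
   feasible s there is a feasible L ranking every member of X0 at least as high
   as s does and putting, in every prefix of the ranking, as many members of X0
   as any feasible ranking (take L minimising the total rank of X0; with only
   upper-bound constraints, a violation of prefix dominance would yield a
   feasible swap lowering that total).  By Abel summation (f is non-increasing)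
   such an L attains H(X0).  Moving each ranking of the support of F to its L
   gives a distribution that is at least as good as F on X0 and has X0-total
   at least H(X0); if H(X0) > |X0| m, some member of X0 strictly gains, and
   maxmin-fairness then forces a loss at level m, which is impossible. *)

Section Swaps.
Variables (U : finType) (t : nat) (grp : U -> 'I_t) (ub : 'I_t -> nat -> nat).

Definition swap (r : ranking U) (x y : U) : ranking U := [ffun u => r (tperm x y u)].

(* Number of members of group k in the top i+1 positions of r. *)
Definition gcount (r : ranking U) (k : 'I_t) (i : nat) : nat :=
  #|[set u | (grp u == k) && (r u <= i)%N]|.

Lemma swap_inj (r : ranking U) x y : injective r -> injective (swap r x y).
Proof. by move=> r_inj u v; rewrite !ffunE => /r_inj /perm_inj. Qed.

Lemma gcount_swap (r : ranking U) x y k (i : nat) : (r y < r x)%N ->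
  (gcount (swap r x y) k i <=
   gcount r k i + [&& grp x == k, grp y != k & r y <= i < r x])%N.
Proof.
move=> lt_yx; rewrite /gcount.
set S := [set u | _ & (r u <= i)%N].
have swapE u : swap r x y u = r (tperm x y u) by rewrite ffunE.
case: (boolP (r y <= i < r x)%N) => [/andP[le_yi lt_ix] | out]; last first.
  have same_side : (r y <= i)%N = (r x <= i)%N.
    case: (leqP (r x) i) => [le_xi|lt_ix]; first exact: leq_trans (ltnW lt_yx) le_xi.
    by move: out; rewrite lt_ix andbT => /negbTE.
  rewrite !andbF addn0 subset_leq_card //; apply/subsetP => u.
  by rewrite !inE swapE; case: tpermP => [->|->|//]; rewrite same_side.
have y_out : y \notin [set u | (grp u == k) && (swap r x y u <= i)%N].
  by rewrite inE swapE tpermR leqNgt lt_ix andbF.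
have sub : [set u | (grp u == k) && (swap r x y u <= i)%N] \subset
           [set u | (u == x) && (grp x == k)] :|: S :\ y.
  apply/subsetP => u u_in; rewrite !inE.
  case: (eqVneq u y) u_in y_out => [-> -> //|ne_uy u_in _].
  move: u_in; rewrite inE swapE; case: tpermP => [->|eq_uy|/= _ _ ->]; last by rewrite orbT.
    by case/andP=> gx _; rewrite gx eqxx.
  by rewrite eq_uy eqxx in ne_uy.
apply: leq_trans (subset_leq_card sub) _; rewrite andbT.
apply: leq_trans (leq_card_setU _ _) _.
case: (eqVneq (grp x) k) => [gx|ngx] /=; last first.
  rewrite (_ : [set u | (u == x) && false] = set0) ?cards0 ?add0n ?addn0.
  - by rewrite subset_leq_card // subD1set.
  - by apply/setP => u; rewrite !inE andbF.
rewrite (_ : [set u | (u == x) && true] = [set x]); last by apply/setP => u; rewrite !inE andbT.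
rewrite cards1 add1n.
case: (eqVneq (grp y) k) => [gy|ngy] /=.
  have yS : y \in S by rewrite inE gy eqxx le_yi.
  by rewrite addn0 (cardsD1 y S) yS.
by rewrite addn1 ltnS subset_leq_card // subD1set.
Qed.

Lemma feasible_gcount (r : ranking U) k (i : nat) :
  feasible grp ub r -> (i < #|U|)%N -> (gcount r k i <= ub k i.+1)%N.
Proof.
by case/andP=> _ /forallP /(_ (Ordinal _)) r_ok lt_iU; exact: (forallP (r_ok _ lt_iU) k).
Qed.

Lemma swap_feasible (r : ranking U) x y : feasible grp ub r -> (r y < r x)%N ->
  (grp x != grp y ->
     forall i, (r y <= i < r x)%N -> (gcount r (grp x) i < ub (grp x) i.+1)%N) ->
  feasible grp ub (swap r x y).
Proof.
move=> r_feas lt_yx slack; case/andP: (r_feas) => /injectiveP r_inj _.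
apply/andP; split; first exact/injectiveP/swap_inj.
apply/forallP => i; apply/forallP => k.
apply: leq_trans (gcount_swap k i lt_yx) _.
case: (boolP [&& _, _ & _]) => [/and3P[/eqP gx ngy in_gap]|_].
  by rewrite addn1 -gx; apply: slack in_gap; rewrite gx eq_sym.
by rewrite addn0; exact: feasible_gcount r_feas (ltn_ord i).
Qed.
End Swaps.

Section Dominance.
Variables (U : finType) (t : nat) (grp : U -> 'I_t) (ub : 'I_t -> nat -> nat).
Variable X : {set U}.

Definition cnt (r : ranking U) (j : nat) : nat := #|[set x in X | (r x < j)%N]|.

Definition cntk (r : ranking U) (k : 'I_t) (j : nat) : nat :=
  #|[set x in X | (grp x == k) && (r x < j)%N]|.

Lemma cnt0 (r : ranking U) : cnt r 0 = 0%N.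
Proof. by apply/eqP; rewrite cards_eq0; apply/eqP/setP => u; rewrite !inE ltn0 andbF. Qed.

Lemma cnt_succ_le (r : ranking U) (j : nat) : injective r -> (cnt r j.+1 <= (cnt r j).+1)%N.
Proof.
move=> r_inj; rewrite /cnt -(cardsID [set x | (r x < j)%N] [set x in X | (r x < j.+1)%N]).
rewrite -[X in (_ <= X)%N]addn1.
have -> : [set x in X | (r x < j.+1)%N] :&: [set x | (r x < j)%N] = [set x in X | (r x < j)%N].
  apply/setP => u; rewrite !inE -andbA.
  by case: (ltnP (r u) j) => [lt_uj|_]; rewrite ?andbT ?andbF // ltnS (ltnW lt_uj) andbT.
rewrite leq_add2l; apply/card_le1_eqP => u v; rewrite !inE !ltnS -!leqNgt.
by move=> /and3P[u_ge _ u_le] /and3P[v_ge _ v_le]; apply/r_inj/ord_inj; lia.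
Qed.

Lemma cnt_succ_occupied (r : ranking U) (j : nat) x :
  x \in X -> r x = j :> nat -> ((cnt r j).+1 <= cnt r j.+1)%N.
Proof.
move=> xX rx; rewrite /cnt.
have x_new : x \notin [set x in X | (r x < j)%N] by rewrite inE rx ltnn andbF.
have sub : x |: [set x in X | (r x < j)%N] \subset [set x in X | (r x < j.+1)%N].
  apply/subsetP => u; rewrite !inE => /orP[/eqP ->|/andP[-> /ltnW //]].
  by rewrite xX rx ltnSn.
by have := subset_leq_card sub; rewrite cardsU1 x_new.
Qed.

Lemma cnt_lt_group (r r' : ranking U) (j : nat) :
  (cnt r j < cnt r' j)%N -> exists k, (cntk r k j < cntk r' k j)%N.
Proof.
have cnt_sum q : cnt q j = (\sum_k cntk q k j)%N.
  rewrite /cnt -sum1_card (partition_big grp xpredT) //=; apply: eq_bigr => k _.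
  rewrite /cntk -[#|[set x in X | _]|]sum1_card; apply: eq_bigl => u.
  by rewrite !inE -andbA [(_ < j)%N && _]andbC.
move=> lt_cnt; apply/existsP; apply: contraTT lt_cnt.
rewrite negb_exists -leqNgt !cnt_sum => /forallP no_k.
by apply: leq_sum => k _; rewrite leqNgt no_k.
Qed.

Section NoImprovingSwap.
Variable L : ranking U.
Hypothesis L_feas : feasible grp ub L.
Hypothesis no_swap : forall x y, x \in X -> y \notin X -> (L y < L x)%N ->
  ~~ feasible grp ub (swap L x y).

Let L_inj : injective L. Proof. by case/andP: L_feas => /injectiveP. Qed.

Lemma same_group_before x y : x \in X -> y \notin X -> grp x = grp y -> (L x < L y)%N.
Proof.
move=> xX yX gxy; rewrite ltnNge leq_eqVlt; apply/negP => /orP[/eqP/ord_inj/L_inj eq_yx|lt_yx].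
  by move: yX; rewrite eq_yx xX.
by apply: (negP (no_swap xX yX lt_yx)); apply: swap_feasible; rewrite // gxy eqxx.
Qed.

Lemma late_member (R : ranking U) k (j : nat) : (cntk L k j < cntk R k j)%N ->
  exists x, [/\ x \in X, grp x = k, (j <= L x)%N &
    forall z, z \in X -> grp z = k -> (j <= L z)%N -> (L x <= L z)%N].
Proof.
move=> lt_k; pose late z := [&& z \in X, grp z == k & (j <= L z)%N].
have [z0 late_z0] : exists z0, late z0.
  apply/existsP; apply: contraTT lt_k; rewrite negb_exists -leqNgt => /forallP early.
  apply: subset_leq_card; apply/subsetP => u; rewrite !inE => /and3P[uX gu _].
  by rewrite uX gu ltnNge; have := early u; rewrite /late uX gu.
case: (arg_minnP (fun z => L z : nat) late_z0) => x /and3P[xX /eqP gx le_jx] x_min.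
by exists x; split => // z zX gz le_jz; apply: x_min; rewrite /late zX gz eqxx.
Qed.

(* For that earliest late member x, group k has slack in L on all positions
   from j - 1 up to x: the members of group k above x are exactly those of X
   before j, fewer than in R, which is feasible. *)
Lemma group_slack (R : ranking U) k (j : nat) x (i : nat) :
  feasible grp ub R -> (cntk L k j < cntk R k j)%N ->
  x \in X -> grp x = k -> (j <= L x)%N ->
  (forall z, z \in X -> grp z = k -> (j <= L z)%N -> (L x <= L z)%N) ->
  (j <= i.+1)%N -> (i < L x)%N -> (gcount grp L k i < ub k i.+1)%N.
Proof.
move=> R_feas lt_k xX gx le_jx x_min le_ji lt_ix.
have L_below : (gcount grp L k i <= cntk L k j)%N.
  apply: subset_leq_card; apply/subsetP => u; rewrite !inE => /andP[/eqP gu le_ui].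
  have lt_ux : (L u < L x)%N := leq_ltn_trans le_ui lt_ix.
  have uX : u \in X.
    apply: contraLR lt_ux => uX; rewrite -leqNgt ltnW //.
    by apply: same_group_before; rewrite ?gx ?gu.
  rewrite uX gu eqxx ltnNge /=; apply: contraL lt_ux => le_ju.
  by rewrite -leqNgt x_min.
have R_above : (cntk R k j <= gcount grp R k i)%N.
  apply: subset_leq_card; apply/subsetP => u; rewrite !inE => /and3P[_ -> lt_uj].
  by rewrite -ltnS (leq_trans lt_uj le_ji).
apply: leq_ltn_trans L_below (leq_trans lt_k (leq_trans R_above _)).
exact: feasible_gcount R_feas (ltn_trans lt_ix (ltn_ord _)).
Qed.

(* If position j holds a non-member y while a deficit
   appears at j + 1, swapping y with the late member x is feasible. *)
Lemma swap_free_dominates (R : ranking U) (j : nat) :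
  feasible grp ub R -> (cnt R j <= cnt L j)%N.
Proof.
move=> R_feas; case/andP: (R_feas) => /injectiveP R_inj _.
elim: j => [|j IH]; first by rewrite cnt0.
case: (boolP [exists x in X, L x == j :> nat]) => [/exists_inP[x0 x0X /eqP Lx0]|free].
  apply: leq_trans (cnt_succ_le j R_inj) _.
  by apply: leq_trans _ (cnt_succ_occupied x0X Lx0); rewrite ltnS.
rewrite leqNgt; apply/negP => /cnt_lt_group[k lt_k].
have [x [xX gx lt_jx x_min]] := late_member lt_k.
have /codomP[y Ly] : Ordinal (ltn_trans lt_jx (ltn_ord (L x))) \in codom L.
  by apply: inj_card_onto => //; rewrite card_ord.
have Ly_j : (L y : nat) = j by rewrite -Ly.
have yX : y \notin X.
  by apply: contra free => yX; apply/exists_inP; exists y; rewrite ?Ly_j.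
have lt_yx : (L y < L x)%N by rewrite Ly_j.
apply: (negP (no_swap xX yX lt_yx)); apply: swap_feasible => // _ i /andP[le_yi lt_ix].
rewrite gx; apply: (group_slack R_feas lt_k xX gx lt_jx x_min _ lt_ix).
by rewrite ltnS -Ly_j.
Qed.
End NoImprovingSwap.

(* Below any feasible s there is a prefix-dominant feasible ranking: minimise
   the total rank of X among feasible rankings that rank X no lower than s. *)
Lemma dominating_ranking (s : ranking U) : feasible grp ub s ->
  exists L, [/\ feasible grp ub L, (forall x, x \in X -> (L x <= s x)%N) &
    forall R j, feasible grp ub R -> (cnt R j <= cnt L j)%N].
Proof.
move=> s_feas.
pose below L := feasible grp ub L && [forall x in X, (L x <= s x)%N].
pose pot (L : ranking U) := (\sum_(x in X) (L x : nat))%N.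
have below_s : below s by rewrite /below s_feas; apply/forall_inP.
case: (arg_minnP pot below_s) => L /andP[L_feas /forall_inP L_le] L_min.
exists L; split=> // R j R_feas; apply: swap_free_dominates => // x y xX yX lt_yx.
apply/negP => swap_feas.
have swap_fix z : z \in X -> z != x -> swap L x y z = L z.
  move=> zX zx; rewrite ffunE tpermD // 1?eq_sym //.
  by apply: contraNneq yX => <-.
have swap_below : below (swap L x y).
  rewrite /below swap_feas; apply/forall_inP => z zX.
  case: (eqVneq z x) => [->|zx]; last by rewrite swap_fix ?L_le.
  by rewrite ffunE tpermL (leq_trans (ltnW lt_yx) (L_le x xX)).
have := L_min _ swap_below; rewrite /pot (bigD1 x xX) [X in (_ <= X)%N](bigD1 x xX) /=.
rewrite ffunE tpermL [X in (_ <= _ + X)%N -> _](eq_bigr (fun z => L z : nat)).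
  by rewrite leq_add2r leqNgt lt_yx.
by move=> z /andP[zX zx]; rewrite swap_fix.
Qed.
End Dominance.

Section Scores.
Variables (R : realType) (U : finType) (f : nat -> R) (g : U -> R).

(* Abel summation: the total f-score of X under r depends only on the prefix
   counts of X, with the weights f i.+1 - f i.+2. *)
Lemma sum_f_prefix (X : {set U}) (r : ranking U) :
  \sum_(u in X) f (r u).+1 =
  #|X|%:R * f #|U| + \sum_(i < #|U|.-1) (f i.+1 - f i.+2) * (cnt X r i.+1)%:R.
Proof.
have tail u : f (r u).+1 =
    f #|U| + \sum_(i < #|U|.-1) (if (r u <= i)%N then f i.+1 - f i.+2 else 0).
  have n_pos : (0 < #|U|)%N := leq_ltn_trans (leq0n _) (ltn_ord (r u)).
  have le_u : (r u <= #|U|.-1)%N by rewrite -ltnS prednK.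
  rewrite -big_mkcondr (eq_bigl (fun i : 'I__ => xpredT i && (r u <= i)%N)) //.
  rewrite -(big_geq_mkord _ _ xpredT (fun i => f i.+1 - f i.+2)).
  rewrite (telescope_sumr_eq (fun i => - f i.+1)) // => [|i _]; last by rewrite opprK addrC.
  by rewrite prednK // opprK addNKr.
rewrite (eq_bigr _ (fun u _ => tail u)) big_split /= sumr_const mulr_natl; congr (_ + _).
rewrite exchange_big /=; apply: eq_bigr => i _.
rewrite -big_mkcondr /= sumr_const mulr_natr; congr (_ *+ _).
by apply: eq_card => u; rewrite !inE ltnS.
Qed.

Hypothesis f_noninc :
  forall i j : nat, (1 <= i)%N -> (i <= j)%N -> (j <= #|U|)%N -> f j <= f i.

(* For non-increasing f these weights are non-negative, so prefix dominance
   implies dominance of the total satisfaction of X. *)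
Lemma sumV_le_of_cnt (X : {set U}) (L r : ranking U) :
  (forall j, (cnt X r j <= cnt X L j)%N) -> sumV f g r X <= sumV f g L X.
Proof.
move=> dom; rewrite /sumV /V !sumrB !sum_f_prefix lerB // lerD2l.
apply: ler_sum => i _; apply: ler_wpM2l; last by rewrite ler_nat.
by rewrite subr_ge0; apply: f_noninc => //; have := ltn_ord i; lia.
Qed.

Variables (t : nat) (grp : U -> 'I_t) (ub : 'I_t -> nat -> nat).

Lemma improving_map (X : {set U}) : exists phi : ranking U -> ranking U,
  forall s, feasible grp ub s ->
    [/\ feasible grp ub (phi s), (forall x, x \in X -> (phi s x <= s x)%N) &
        forall r, feasible grp ub r -> sumV f g r X <= sumV f g (phi s) X].
Proof.
pose good (s L : ranking U) := [&& feasible grp ub L, [forall x in X, (L x <= s x)%N] &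
  [forall r, feasible grp ub r ==> (sumV f g r X <= sumV f g L X)]].
exists (fun s => odflt s [pick L | good s L]) => s s_feas.
case: pickP => [L /and3P[L_feas /forall_inP L_le /forallP L_opt] | no_good] /=.
  by split=> // r r_feas; apply: (implyP (L_opt r)).
have [L [L_feas L_le L_dom]] := dominating_ranking X s_feas.
have : good s L.
  rewrite /good L_feas /=; apply/andP; split; first by apply/forall_inP => x /L_le.
  apply/forallP => r; apply/implyP => r_feas.
  by apply: sumV_le_of_cnt => j; apply: L_dom.
by rewrite no_good.
Qed.
End Scores.

Section Fairness.
Variables (R : realType) (U : finType) (t : nat).
Variables (grp : U -> 'I_t) (ub : 'I_t -> nat -> nat) (f : nat -> R) (g : U -> R).
Implicit Type D : {ffun ranking U -> R}.

Lemma expect_le D (a b : ranking U -> R) : is_distr grp ub D ->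
  (forall s, feasible grp ub s -> a s <= b s) ->
  \sum_s D s * a s <= \sum_s D s * b s.
Proof.
move=> [D_ge0 [_ D_supp]] le_ab; apply: ler_sum => s _.
have [-> | D_s] := eqVneq (D s) 0; first by rewrite !mul0r.
by rewrite ler_wpM2l // le_ab // D_supp.
Qed.

Lemma expect_cst D (c : R) : is_distr grp ub D -> \sum_s D s * c = c.
Proof. by move=> [_ [D_sum _]]; rewrite -mulr_suml D_sum mul1r. Qed.

Lemma sum_expV D (X : {set U}) :
  \sum_(u in X) expV f g D u = \sum_s D s * sumV f g s X.
Proof. by rewrite exchange_big /=; apply: eq_bigr => s _; rewrite mulr_sumr. Qed.

Lemma sum_expV_le D (X : {set U}) (h : R) : is_distr grp ub D ->
  (forall r, feasible grp ub r -> sumV f g r X <= h) -> \sum_(u in X) expV f g D u <= h.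
Proof.
by move=> D_distr le_h; rewrite sum_expV -[leRHS](expect_cst h D_distr) expect_le.
Qed.

Definition push D (phi : ranking U -> ranking U) : {ffun ranking U -> R} :=
  [ffun L => \sum_(s | phi s == L) D s].

Lemma push_sum D phi (w : ranking U -> R) :
  \sum_L push D phi L * w L = \sum_s D s * w (phi s).
Proof.
rewrite [RHS](partition_big phi xpredT) //=; apply: eq_bigr => L _.
by rewrite ffunE mulr_suml; apply: eq_big => [s|s /eqP ->].
Qed.

Lemma push_distr D phi : is_distr grp ub D ->
  (forall s, feasible grp ub s -> feasible grp ub (phi s)) -> is_distr grp ub (push D phi).
Proof.
move=> D_distr phi_feas; have [D_ge0 [D_sum D_supp]] := D_distr.
split; [|split].
- by move=> L; rewrite ffunE sumr_ge0.
- by rewrite -(eq_bigr _ (fun L _ => mulr1 (push D phi L))) push_sum expect_cst.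
- move=> L; rewrite ffunE; apply: contraNT => L_infeas.
  apply/eqP/big1 => s /eqP phi_s.
  by apply: contraNeq L_infeas => /D_supp /phi_feas; rewrite phi_s.
Qed.

Hypothesis f_noninc :
  forall i j : nat, (1 <= i)%N -> (i <= j)%N -> (j <= #|U|)%N -> f j <= f i.

(* Otherwise the
   pushforward of F along an improving map for X0 dominates F on X0 and strictly
   improves some member of X0, so fairness demands a loss at level m. *)
Lemma min_level_H F (m : R) : maxmin_fair grp ub f g F ->
  (forall u, m <= expV f g F u) ->
  forall r, feasible grp ub r ->
    sumV f g r [set u | expV f g F u == m] <= #|[set u | expV f g F u == m]|%:R * m.
Proof.
move=> [F_distr F_fair] m_min; set X0 := [set u | _ == m] => r r_feas.
have X0_m u : u \in X0 -> expV f g F u = m by rewrite inE => /eqP.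
have sum_X0 : \sum_(u in X0) expV f g F u = #|X0|%:R * m.
  by rewrite mulr_natl -sumr_const; apply: eq_bigr => u /X0_m.
have [phi phi_spec] := improving_map g f_noninc grp ub X0.
set D := push F phi.
have D_distr : is_distr grp ub D by apply: push_distr => // s /phi_spec[].
have D_ge_F x : x \in X0 -> expV f g F x <= expV f g D x.
  move=> xX; rewrite /expV push_sum; apply: expect_le => // s /phi_spec[_ le_s _].
  by rewrite /V lerD2r f_noninc ?ltnS ?le_s ?ltn_ord.
have H_le_D : sumV f g r X0 <= \sum_(u in X0) expV f g D u.
  rewrite sum_expV push_sum -[leLHS](expect_cst _ F_distr).
  by apply: expect_le => // s /phi_spec[_ _]; apply.
rewrite leNgt; apply/negP => lt_m.
have [x xX lt_x] : exists2 x, x \in X0 & expV f g F x < expV f g D x.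
  apply/exists_inP; apply: contraTT lt_m; rewrite negb_exists_in => /forall_inP not_lt.
  rewrite -leNgt -sum_X0 (le_trans H_le_D) // ler_sum // => u uX.
  by rewrite leNgt not_lt.
have [v [lt_v le_v]] := F_fair D x D_distr lt_x.
have vX : v \in X0 by rewrite inE eq_le m_min andbT -(X0_m x xX).
by have := D_ge_F v vX; rewrite leNgt lt_v.
Qed.
End Fairness.

Unset Implicit Arguments.
Set Strict Implicit.

Theorem mainTheorem12 (R : realType) (U : finType) (t : nat)
  (grp : U -> 'I_t) (ub : 'I_t -> nat -> nat) (f : nat -> R) (g : U -> R)
  (hU : (0 < #|U|)%N)
  (hf : forall i j : nat, (1 <= i)%N -> (i <= j)%N -> (j <= #|U|)%N -> f j <= f i)
  (hS : exists r, feasible grp ub r)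
  (F : {ffun ranking U -> R})
  (hF : maxmin_fair grp ub f g F) :
  exists (u0 : U) (X0 : {set U}) (h0 : R),
    [/\ X0 != set0, is_H grp ub f g X0 h0,
        expV f g F u0 = h0 / #|X0|%:R,
        (forall u, expV f g F u0 <= expV f g F u) &
        (forall (X : {set U}) (h : R), X != set0 -> is_H grp ub f g X h ->
            h0 / #|X0|%:R <= h / #|X|%:R)].
Proof.
have [F_distr _] := hF; set E := expV f g F.
have [u1 _] := card_gt0P hU.
case: (arg_minP E (isT : xpredT u1)) => u0 _ u0_min; set m := E u0.
have m_min u : m <= E u by apply: u0_min.
have sum_ge (X : {set U}) : #|X|%:R * m <= \sum_(u in X) E u.
  by rewrite mulr_natl -sumr_const ler_sum.
set X0 := [set u | E u == m].
have X0_n0 : X0 != set0 by apply/set0Pn; exists u0; rewrite inE.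
have [rs rs_feas] := hS.
case: (arg_maxP (fun r => sumV f g r X0) rs_feas) => rmax rmax_feas rmax_opt.
set h0 := sumV f g rmax X0.
have h0_eq : h0 = #|X0|%:R * m.
  apply/eqP; rewrite eq_le (min_level_H hf hF m_min rmax_feas) /=.
  exact: le_trans (sum_ge X0) (sum_expV_le F_distr rmax_opt).
have card_gt0 (X : {set U}) : X != set0 -> 0 < #|X|%:R :> R.
  by rewrite ltr0n lt0n cards_eq0.
have h0_avg : h0 / #|X0|%:R = m by rewrite h0_eq [_ * m]mulrC mulfK // gt_eqF ?card_gt0.
exists u0, X0, h0; split=> //; first by split; [exists rmax | exact: rmax_opt].
move=> X h /card_gt0 X_gt0 [_ h_max]; rewrite h0_avg ler_pdivlMr // mulrC.
exact: le_trans (sum_ge X) (sum_expV_le F_distr h_max).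
Qed.
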